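(* Let $R$ be an integral domain, $f \in R[X]$ a monic polynomial, and $f = \prod_{i=1}^n f_i$ a factorisation of $f$ into monic polynomials $f_i \in R[X]$. Let $\Psi_f : R[X]/(f) \to \bigoplus_{i=1}^n R[X]/(f_i)$ be the natural map $h \bmod f \mapsto \bigoplus_i h \bmod f_i$. Then the determinant of $\Psi_f$ written with respect to the standard bases is \[\det(\Psi_f) = \prod_{1 \le i < j \le n}\mathcal{R}(f_j, f_i).\]
   Context: The standard basis of $R[X]/(g)$ for monic $g$ of degree $d$ is $(1, \overline{X}, \dots, \overline{X}^{d-1})$; the summands of $\bigoplus_{i=1}^n R[X]/(f_i)$ are taken in the order $i = 1, \dots, n$. For monic polynomials $g,h$, the resultant is $\mathcal{R}(g,h) = \prod_{\alpha}\prod_{\beta}(\alpha-\beta)$, the product over the roots $\alpha$ of $g$ and $\beta$ of $h$ (with multiplicity) in an algebraic closure of the fraction field of $R$; it lies in $R$. *)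

From HB Require Import structures.
From mathcomp Require Import all_boot all_order all_algebra.
Set Implicit Arguments. Unset Strict Implicit. Unset Printing Implicit Defensive.
Import Order.TTheory GRing.Theory Num.Theory.
Local Open Scope ring_scope.

(* The paper's resultant R(g,h) = prod_{g(alpha)=0} prod_{h(beta)=0} (alpha - beta)
   for monic g, h.  MathComp's [resultant p q] is det of its Sylvester matrix
   whose rows are the coefficient vectors (in INCREASING degree order) of
   X^k p and X^k q; this equals (-1)^(deg p * deg q) times the classical
   Sylvester resultant, i.e. for monic p, q it equals prod (beta - alpha)
   = R(q, p) in the paper's notation. *)
Definition paper_resultant (R : nzRingType) (g h : {poly R}) : R := resultant h g.

(* Row k (k < N := sum_i deg f_i = deg f) is the image of the basis vector
   X^k mod f; its entries, grouped in blocks i = 0..n-1 (in this order), are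
   the coefficients of X^0, ..., X^(deg f_i - 1) of (X^k mod f) mod f_i.
   (This is the transpose of the column convention; the determinant is the same.) *)
Definition Psi_mx (R : idomainType) (n : nat) (f : {poly R}) (F : 'I_n -> {poly R})
  : 'M[R]_(\sum_(i < n) (size (F i)).-1) :=
  \mxrow_(i < n)
    (\matrix_(k < \sum_(i < n) (size (F i)).-1, l < (size (F i)).-1)
       ((('X^k %% f) %% F i)`_l)).

From HB Require Import structures.
From mathcomp Require Import all_boot all_order all_algebra.
Import GRing.Theory.
Local Open Scope ring_scope.

(** Write [P_i = F_0 * ... * F_(i-1)].  The polynomials [P_i * X^l]
    ([l < deg F_i], [i < n]) have pairwise distinct degrees [deg P_i + l]
    covering [0, deg f) and are monic, so they form a basis of [R[X]/(f)]
    related to the standard one by a unitriangular matrix.  In this basis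
    the matrix of [Psi_f] is block upper triangular, since [F_j] divides
    [P_i] for [j < i], and its [i]-th diagonal block is the matrix of
    multiplication by [P_i] on [R[X]/(F_i)].  That determinant is
    multiplicative in [P_i], and for a single factor [F_k] it is the
    resultant [R(F_i, F_k)], by row-reducing the Sylvester matrix modulo
    [F_i]. *)

Lemma det_castmx (R : comNzRingType) n m (e : n = m) (A : 'M[R]_n) :
  \det (castmx (e, e) A) = \det A.
Proof. by case: m / e; rewrite castmx_id. Qed.

Lemma det_mxblock_ublock (R : comNzRingType) (p : nat) (p_ : 'I_p -> nat)
    (B : forall i j, 'M[R]_(p_ i, p_ j)) :
  (forall i j : 'I_p, (j < i)%N -> B i j = 0) ->
  \det (\mxblock_(i, j) B i j) = \prod_(i < p) \det (B i i).
Proof.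
elim: p p_ B => [|p IHp] p_ B B_lower.
  rewrite big_ord0; move: (\mxblock_(i, j) B i j); rewrite big_ord0.
  exact: det_mx00.
rewrite mxblock_recul det_castmx.
have -> : \mxcol_i B (lift ord0 i) ord0 = 0.
  rewrite -(mxcol0 (p_ := fun i => p_ (lift ord0 i))).
  by apply: eq_mxcol => i; apply: B_lower.
rewrite det_ublock big_ord_recl; congr (_ * _).
by apply: IHp => i j lt_ji; apply: B_lower.
Qed.

Section MultiplicationMatrix.
Context {R : idomainType}.
Implicit Types g h p : {poly R}.

Lemma poly_sum_coefXn {p d} : (size p <= d)%N -> p = \sum_(m < d) p`_m *: 'X^m.
Proof.
move=> le_p_d; rewrite -poly_def; apply/polyP => i; rewrite coef_poly.
by case: ltnP => // le_d_i; rewrite nth_default // (leq_trans le_p_d le_d_i).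
Qed.

Lemma size_modp_monic p h : h \is monic -> (size (p %% h)%R <= (size h).-1)%N.
Proof.
move=> mon_h; rewrite -ltnS prednK ?ltn_modpN0 ?monic_neq0 //.
by rewrite size_poly_gt0 monic_neq0.
Qed.

Lemma modp_sumZ h d (c : 'I_d -> R) (q : 'I_d -> {poly R}) :
  lead_coef h \is a GRing.unit ->
  (\sum_(i < d) c i *: q i) %% h = \sum_(i < d) c i *: (q i %% h).
Proof.
move=> unit_h; elim/big_rec2: _ => [|i x y _ <-]; first by rewrite mod0p.
by rewrite Pdiv.IdomainUnit.modpD // Pdiv.IdomainUnit.modpZl.
Qed.

Lemma size_prod_monic (I : eqType) (r : seq I) (P : pred I) (G : I -> {poly R}) :
  (forall i, G i \is monic) ->
  size (\prod_(i <- r | P i) G i) = (\sum_(i <- r | P i) (size (G i)).-1).+1.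
Proof.
move=> mon_G; elim/big_rec2: _ => [|i x y _ size_y]; first by rewrite size_poly1.
have y_neq0 : y != 0 by rewrite -size_poly_eq0 size_y.
rewrite size_monicM // size_y addnS -[RHS]addSn prednK //.
by rewrite size_poly_gt0 monic_neq0.
Qed.

Definition mulmod_mx h g : 'M[R]_((size h).-1) :=
  \matrix_(k, l) (('X^k * g) %% h)`_l.

Variable h : {poly R}.
Hypothesis mon_h : h \is monic.
Let unit_h : lead_coef h \is a GRing.unit.
Proof. by rewrite (monicP mon_h) unitr1. Qed.

Lemma mulmod_mx1 : mulmod_mx h 1 = 1%:M.
Proof.
apply/matrixP => k l; rewrite !mxE mulr1 modp_small ?coefXn 1?eq_sym //.
by rewrite size_polyXn -ltn_predRL.
Qed.

Lemma mulmod_mxM g1 g2 : mulmod_mx h (g1 * g2) = mulmod_mx h g1 *m mulmod_mx h g2.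
Proof.
apply/matrixP => k l; rewrite !mxE.
have -> : ('X^k * (g1 * g2)) %% h = ((('X^k * g1) %% h) * g2) %% h.
  by rewrite mulrA -!(mulrC g2) Pdiv.IdomainUnit.modp_mul.
rewrite {1}(poly_sum_coefXn (size_modp_monic ('X^k * g1) h mon_h)) mulr_suml.
under eq_bigr do rewrite -scalerAl.
rewrite modp_sumZ // coef_sum; apply: eq_bigr => m _.
by rewrite coefZ !mxE.
Qed.

Lemma det_mulmod_mx_prod (I : Type) (r : seq I) (P : pred I) (G : I -> {poly R}) :
  \det (mulmod_mx h (\prod_(i <- r | P i) G i)) =
    \prod_(i <- r | P i) \det (mulmod_mx h (G i)).
Proof.
apply: (big_morph (fun g => \det (mulmod_mx h g))) => [g1 g2|].
  by rewrite mulmod_mxM det_mulmx.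
by rewrite mulmod_mx1 det1.
Qed.

(** Subtracting from each row [X^k * g] of the Sylvester matrix the
    combination [(X^k * g) %/ h] of the rows [X^j * h] leaves the rows of
    [mulmod_mx h g], padded with zeros. *)
Lemma Sylvester_mx_modp g :
  Sylvester_mx g h =
    block_mx 1%:M
      (\matrix_(k < (size h).-1, j < (size g).-1) (('X^k * g) %/ h)`_j) 0 1%:M
    *m col_mx (row_mx (mulmod_mx h g) 0) (dsubmx (Sylvester_mx g h)).
Proof.
have h_neq0 := monic_neq0 mon_h.
rewrite mul_block_col !mul1mx mul0mx add0r.
rewrite -{1}[Sylvester_mx g h]vsubmxK; congr col_mx.
rewrite /Sylvester_mx col_mxKu col_mxKd.
apply/row_matrixP => k; rewrite rowE mul_rV_lin1 /= rVpoly_delta.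
rewrite linearD /= row_mul.
have -> : row k (\matrix_(k < (size h).-1, j < (size g).-1)
                   (('X^k * g) %/ h)`_j) = poly_rV (('X^k * g) %/ h).
  by apply/rowP => j; rewrite !mxE.
rewrite mul_rV_lin1 /= poly_rV_K; last first.
  have [->|g_neq0] := eqVneq g 0; first by rewrite mulr0 div0p size_poly0.
  rewrite size_divp // mulrC size_mulXn //.
  have size_g : (0 < size g)%N by rewrite size_poly_gt0.
  rewrite leq_subLR -[in X in (X <= _)%N](prednK size_g) addnS -addSn.
  by rewrite leq_add2r.
have -> : row k (row_mx (mulmod_mx h g) (0 : 'M_((size h).-1, (size g).-1))) =
          poly_rV (('X^k * g) %% h).
  apply/rowP => j; rewrite !mxE; case: splitP => j' ->; rewrite ?mxE //.
  rewrite nth_default //.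
  exact: leq_trans (size_modp_monic _ h mon_h) (leq_addr _ _).
by rewrite -raddfD /= addrC -Pdiv.IdomainUnit.divp_eq.
Qed.

Lemma det_Sylvester_band_monic g :
  \det (rsubmx (dsubmx (Sylvester_mx g h))) = 1.
Proof.
have size_h : (0 < size h)%N by rewrite size_poly_gt0 monic_neq0.
rewrite /Sylvester_mx col_mxKd det_trig.
  rewrite big1 // => i _.
  rewrite !mxE /= rVpoly_delta /= coefXnM ltnNge leq_addl /= addnK.
  exact: monicP mon_h.
apply/is_trig_mxP => i j lt_ij.
rewrite !mxE /= rVpoly_delta /= coefXnM; case: ifP => // _.
rewrite nth_default // -addnBA ?(ltnW lt_ij) //.
by rewrite -{1}(prednK size_h) -addn1 leq_add2l subn_gt0.
Qed.

Lemma resultant_mulmod_mx g : resultant g h = \det (mulmod_mx h g).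
Proof.
rewrite /resultant Sylvester_mx_modp det_mulmx det_ublock !det1 !mul1r.
rewrite -[dsubmx _]hsubmxK -block_mxEv det_lblock.
by rewrite det_Sylvester_band_monic mulr1.
Qed.

End MultiplicationMatrix.

Section MonicFactorisation.
Variables (R : idomainType) (n : nat) (F : 'I_n -> {poly R}).
Hypothesis mon_F : forall i, F i \is monic.

Local Notation d i := (size (F i)).-1.
Local Notation N := (\sum_(i < n) d i).
Local Notation P i := (\prod_(k < n | (k < i)%N) F k).
Local Notation offset i := (\sum_(k < n | (k < i)%N) d k).

Definition prefix_basis_mx : 'M[R]_N :=
  \mxcol_i (\matrix_(l < d i, t < N) (P i * 'X^l)`_t).

Lemma size_prefix_prod (i : 'I_n) : size (P i) = (offset i).+1.
Proof. exact: size_prod_monic. Qed.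

Lemma offset_add_deg_le (i : 'I_n) : (offset i + d i <= N)%N.
Proof.
rewrite [N](bigD1 i) //= addnC leq_add2l big_mkcond [X in (_ <= X)%N]big_mkcond.
apply: leq_sum => k _; case: ifP => // lt_k_i.
by rewrite -(inj_eq val_inj) /= neq_ltn lt_k_i.
Qed.

Lemma monic_prefix_prod (i : 'I_n) : P i \is monic.
Proof. exact: monic_prod. Qed.

(** Row [s] holds [P_i * X^l] with [s = offset i + l], a monic polynomial of
    degree [s]; hence the matrix is lower unitriangular. *)
Lemma det_prefix_basis_mx : \det prefix_basis_mx = 1.
Proof.
rewrite det_trig.
  apply: big1 => s _; rewrite !mxE coefMXn {1 2}(tagnat.rect s).
  rewrite ltnNge leq_addl addnK /=.
  have := monicP (monic_prefix_prod (tagnat.sig1 s)).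
  by rewrite /lead_coef size_prefix_prod.
apply/is_trig_mxP => s t lt_st; rewrite !mxE coefMXn; case: ltnP => // _.
by rewrite nth_default // size_prefix_prod ltn_subRL addnC -(tagnat.rect s).
Qed.

Lemma mul_prefix_basis_Psi_mx :
  prefix_basis_mx *m Psi_mx (\prod_(i < n) F i) F =
  \mxblock_(i, j) (\matrix_(l < d i, l' < d j) ((P i * 'X^l) %% F j)`_l').
Proof.
have size_f : size (\prod_(i < n) F i) = N.+1 by apply: size_prod_monic.
rewrite mul_mxcol_mxrow; apply: eq_mxblock => i j; apply/matrixP => l l'.
have size_row : (size (P i * 'X^l)%R <= N)%N.
  rewrite size_Mmonic ?monicXn ?monic_neq0 ?monic_prefix_prod //.
  rewrite size_prefix_prod size_polyXn addnS /= addSn.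
  by apply: leq_trans (offset_add_deg_le i); rewrite ltn_add2l.
rewrite !mxE [in RHS](poly_sum_coefXn size_row).
rewrite modp_sumZ ?(monicP (mon_F j)) ?unitr1 // coef_sum.
apply: eq_bigr => t _; rewrite !mxE coefZ.
by rewrite [('X^t %% \prod_(i < n) F i)]modp_small // size_polyXn size_f ltnS.
Qed.

Lemma det_Psi_mx_prod :
  \det (Psi_mx (\prod_(i < n) F i) F) =
    \prod_(i < n) \prod_(k < n | (k < i)%N) resultant (F k) (F i).
Proof.
rewrite -[LHS]mul1r -{1}det_prefix_basis_mx -det_mulmx mul_prefix_basis_Psi_mx.
rewrite det_mxblock_ublock => [|i j lt_ji]; last first.
  apply/matrixP => l l'; rewrite !mxE (bigD1 j) //= -mulrA mulrC modp_mull.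
  by rewrite coef0.
apply: eq_bigr => i _.
have -> : \matrix_(l < d i, l' < d i) ((P i * 'X^l) %% F i)`_l' =
          mulmod_mx (F i) (P i).
  by apply/matrixP => l l'; rewrite !mxE mulrC.
rewrite det_mulmod_mx_prod //; apply: eq_bigr => k _.
by rewrite resultant_mulmod_mx.
Qed.

End MonicFactorisation.

Theorem theoremA3 (R : idomainType) (n : nat) (f : {poly R}) (F : 'I_n -> {poly R}) :
  f \is monic ->
  (forall i, F i \is monic) ->
  f = \prod_(i < n) F i ->
  \det (Psi_mx f F) =
    \prod_(i < n) \prod_(j < n | (i < j)%N) paper_resultant (F j) (F i).
Proof.
by move=> _ mon_F ->; rewrite det_Psi_mx_prod // (exchange_big_dep xpredT).
Qed.
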